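(* Let $\mathcal{G}$ and $\mathcal{H}$ be groupoids (not necessarily finite) and let $\phi,\psi\colon\widetilde{S}(\mathcal{G})\to\widetilde{S}(\mathcal{H})$ be morphisms of quasi-schemoids. Then there exists a homotopy $L\colon\phi\Rightarrow\psi$ if and only if $\psi(j)^{-1}\phi(i)=\psi(l)^{-1}\phi(k)$ for all morphisms $(j,i)$ and $(l,k)$ of $\widetilde{\mathcal{G}}$ with $j^{-1}i=l^{-1}k$.
   Context: For a groupoid $\mathcal{H}$, the quasi-schemoid $\widetilde{S}(\mathcal{H})=(\widetilde{\mathcal{H}},S)$ has $ob(\widetilde{\mathcal{H}})=mor(\mathcal{H})$, $\mathrm{Hom}_{\widetilde{\mathcal{H}}}(g,h)=\{(h,g)\}$ if $t(h)=t(g)$ and empty otherwise (composition $(k,h)\circ(h,g)=(k,g)$), and partition $S=\{\mathcal{G}_f\}_{f\in mor(\mathcal{H})}$ with $\mathcal{G}_f=\{(k,l)\mid k^{-1}l=f\}$. Here $\phi(i)$, $\psi(j)$ denote the images of objects of $\widetilde{\mathcal{G}}$, i.e. morphisms of $\mathcal{H}$, and products are compositions in $\mathcal{H}$. A morphism of quasi-schemoids is a functor sending each block of the source partition into some block of the target partition. Product: $(\mathcal{C},S)\times(\mathcal{E},S')=(\mathcal{C}\times\mathcal{E},\{\sigma\times\tau\})$. $[1]$ has objects $0,1$ and one non-identity morphism $0\to1$; $I=([1],\{\{f\}\}_f)$. A homotopy $L\colon\phi\Rightarrow\psi$ is a morphism of quasi-schemoids $L\colon\widetilde{S}(\mathcal{G})\times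 I\to\widetilde{S}(\mathcal{H})$ with $L\circ\varepsilon_0=\phi$, $L\circ\varepsilon_1=\psi$, where $\varepsilon_i(a)=(a,i)$, $\varepsilon_i(f)=(f,1_i)$. *)

(* Composition is a total function [comp g f] (= g o f) whose value is only
   constrained when [src g = tgt f]; all axioms are stated for composable
   pairs only. *)
Record groupoid : Type := Groupoid {
  obj : Type;
  mor : Type;
  src : mor -> obj;
  tgt : mor -> obj;
  idm : obj -> mor;
  comp : mor -> mor -> mor;
  inv : mor -> mor;
  src_idm : forall x, src (idm x) = x;
  tgt_idm : forall x, tgt (idm x) = x;
  src_comp : forall g f, src g = tgt f -> src (comp g f) = src f;
  tgt_comp : forall g f, src g = tgt f -> tgt (comp g f) = tgt g;
  comp_assoc : forall h g f, src h = tgt g -> src g = tgt f ->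
      comp h (comp g f) = comp (comp h g) f;
  comp_idl : forall f, comp (idm (tgt f)) f = f;
  comp_idr : forall f, comp f (idm (src f)) = f;
  src_inv : forall f, src (inv f) = tgt f;
  tgt_inv : forall f, tgt (inv f) = src f;
  comp_invl : forall f, comp (inv f) f = idm (src f);
  comp_invr : forall f, comp f (inv f) = idm (tgt f)
}.

Arguments src {g0} _.
Arguments tgt {g0} _.
Arguments idm {g0} _.
Arguments comp {g0} _ _.
Arguments inv {g0} _.

(* The quasi-schemoid S~(H): objects are mor(H); there is exactly one
   morphism (h,g) : g -> h iff tgt h = tgt g; the partition block of (k,l)
   is G_f with f = k^{-1} l.

   Since all hom-sets of H~ have at most one element, a functor
   G~ -> H~ is exactly a map phi : mor G -> mor H on objects such that
   tgt j = tgt i implies tgt (phi j) = tgt (phi i) (the morphism part is then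
   forced: (j,i) |-> (phi j, phi i), and functoriality is automatic).
   A morphism of quasi-schemoids additionally sends every block G_f into some
   block G_f'. *)
Definition qs_morphism (G H : groupoid) (phi : mor G -> mor H) : Prop :=
  (forall j i : mor G, tgt j = tgt i -> tgt (phi j) = tgt (phi i)) /\
  (forall f : mor G, exists f' : mor H,
     forall j i : mor G, tgt j = tgt i -> comp (inv j) i = f ->
       comp (inv (phi j)) (phi i) = f').

(* The category [1]: objects false (= 0) and true (= 1); morphisms. *)
Inductive mor1 : Type := id0 | id1 | arr01.

Definition dom1 (u : mor1) : bool :=
  match u with id0 => false | id1 => true | arr01 => false end.
Definition cod1 (u : mor1) : bool :=
  match u with id0 => false | id1 => true | arr01 => true end.

(* A homotopy L : phi => psi is a morphism of quasi-schemoids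
   S~(G) x I -> S~(H).  Objects of G~ x [1] are pairs (a, e); morphisms are
   ((j,i), u) : (i, dom u) -> (j, cod u) with tgt j = tgt i; the blocks of
   the product partition are G_f x {u}.  Again the target has at most one
   morphism between any two objects, so the functor is determined by its
   object map L : mor G * bool -> mor H, subject to the condition that the
   image of every morphism exists.  L o eps_0 = phi and L o eps_1 = psi
   (equality of functors = equality of object maps here). *)
Definition is_homotopy (G H : groupoid) (phi psi : mor G -> mor H)
    (L : mor G * bool -> mor H) : Prop :=
  (forall (j i : mor G) (u : mor1), tgt j = tgt i ->
     tgt (L (j, cod1 u)) = tgt (L (i, dom1 u))) /\
  (forall (f : mor G) (u : mor1), exists f' : mor H,
     forall j i : mor G, tgt j = tgt i -> comp (inv j) i = f ->
       comp (inv (L (j, cod1 u))) (L (i, dom1 u)) = f') /\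
  (forall a : mor G, L (a, false) = phi a) /\
  (forall a : mor G, L (a, true) = psi a).

(* A homotopy phi => psi is determined by its two ends: on objects it must be
   phi at 0 and psi at 1.  The only new requirements concern the arrow
   0 -> 1: the morphism (j,i) of G~ must be sent to a morphism
   (psi j, phi i) of H~, and each block G_f x {0 -> 1} must land in a single
   block, i.e. psi(j)^-1 phi(i) depends only on j^-1 i.  Conversely, gluing
   phi and psi along these conditions gives a homotopy; the required block of
   G_f can be named explicitly through its representative (1, f), so no
   choice is needed. *)


Section GroupoidFacts.

Variable G : groupoid.

Lemma inv_idm (x : obj G) : inv (idm x) = idm x.
Proof.
  transitivity (comp (inv (idm x)) (idm x)).
  - pose proof (comp_idr G (inv (idm x))) as Hid.
    rewrite src_inv, tgt_idm in Hid. symmetry. exact Hid.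
  - rewrite comp_invl, src_idm. reflexivity.
Qed.

Lemma comp_inv_idm_tgt (f : mor G) : comp (inv (idm (tgt f))) f = f.
Proof. rewrite inv_idm. apply comp_idl. Qed.

End GroupoidFacts.

Section Homotopy.

Variables G H : groupoid.
Variables phi psi : mor G -> mor H.

Definition homotopy_compatible : Prop :=
  forall j i l k : mor G,
    tgt j = tgt i -> tgt l = tgt k ->
    comp (inv j) i = comp (inv l) k ->
    tgt (psi j) = tgt (phi i) /\
    comp (inv (psi j)) (phi i) = comp (inv (psi l)) (phi k).

Lemma homotopy_compatible_of (L : mor G * bool -> mor H) :
  is_homotopy G H phi psi L -> homotopy_compatible.
Proof.
  intros [Ltgt [Lblock [L0 L1]]] j i l k Hji Hlk Hblock.
  split.
  - specialize (Ltgt j i arr01 Hji). simpl in Ltgt.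
    rewrite L0, L1 in Ltgt. exact Ltgt.
  - destruct (Lblock (comp (inv j) i) arr01) as [f' Hf']. simpl in Hf'.
    rewrite <- !L0, <- !L1.
    rewrite (Hf' j i Hji eq_refl), (Hf' l k Hlk (eq_sym Hblock)).
    reflexivity.
Qed.

Definition homotopy_glue (p : mor G * bool) : mor H :=
  if snd p then psi (fst p) else phi (fst p).

Lemma homotopy_glue_is_homotopy :
  qs_morphism G H phi -> qs_morphism G H psi -> homotopy_compatible ->
  is_homotopy G H phi psi homotopy_glue.
Proof.
  intros [phi_tgt phi_block] [psi_tgt psi_block] compat.
  unfold is_homotopy, homotopy_glue.
  split; [| split; [| split]]; try reflexivity.
  - intros j i [] Hji; simpl; auto.
    exact (proj1 (compat j i j i Hji Hji eq_refl)).
  - intros f []; simpl.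
    + exact (phi_block f).
    + exact (psi_block f).
    + exists (comp (inv (psi (idm (tgt f)))) (phi f)).
      intros j i Hji Hf.
      apply (compat j i (idm (tgt f)) f Hji (tgt_idm G (tgt f))).
      rewrite comp_inv_idm_tgt. exact Hf.
Qed.

End Homotopy.

Theorem lemma4p11 (G H : groupoid) (phi psi : mor G -> mor H)
  (Hphi : qs_morphism G H phi) (Hpsi : qs_morphism G H psi) :
  (exists L : mor G * bool -> mor H, is_homotopy G H phi psi L) <->
  (forall j i l k : mor G,
     tgt j = tgt i -> tgt l = tgt k ->
     comp (inv j) i = comp (inv l) k ->
     tgt (psi j) = tgt (phi i) /\
     comp (inv (psi j)) (phi i) = comp (inv (psi l)) (phi k)).
Proof.
  split.
  - intros [L HL]. exact (homotopy_compatible_of G H phi psi L HL).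
  - intros compat. exists (homotopy_glue G H phi psi).
    exact (homotopy_glue_is_homotopy G H phi psi Hphi Hpsi compat).
Qed.
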